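(* Let $(P_t)_{t\in\mathbb{R}_+}$ be a stochastically monotone Feller semigroup on $\mathbb{R}$. For $t\ge0$, $n\ge2$ and $\mathbf{x}=(x_1,\dots,x_n)\in\overline{\mathbb{R}}^n$, let $Q^{(n)}_t(\mathbf{x},\cdot)$ be the law on $\overline{\mathbb{R}}^n$ of $(F^{[-1]}_{x_i,t}(U))_{1\le i\le n}$, where $U$ is uniform on $[0,1]$. Then for all $t\ge0$ and $n\ge2$, $Q^{(n)}_t$ is an order-preserving Markov kernel on $\overline{\mathbb{R}}^n$, and for all $t\ge0$, the family $(Q^{(n)}_t)_{n\ge1}$ with $Q^{(1)}_t=\tilde{P}_t$ is consistent.
   Context: $\overline{\mathbb{R}}=[-\infty,+\infty]$ with the metric $|\tanh y-\tanh x|$, and $\overline{\mathbb{R}}^n$ with the product topology. For $x\in\mathbb{R}$, $F^{[-1]}_{x,t}(u)=\inf\{y\in\mathbb{R}:P_t(x,(-\infty,y])\ge u\}$, and $F^{[-1]}_{\pm\infty,t}\equiv\pm\infty$. $\tilde{P}_t(x,B)=P_t(x,B\cap\mathbb{R})$ for $x\in\mathbb{R}$, $\tilde{P}_t(\pm\infty,\cdot)=\delta_{\pm\infty}$. A kernel $K$ on $\overline{\mathbb{R}}^n$ is order-preserving if for all $\mathbf{x}$, $K(\mathbf{x},\cdot)$-a.s. $\mathbf{y}$ satisfies $x_i\le x_j\Rightarrow y_i\le y_j$ for all $i,j$. A family $(K^{(n)})_{n\ge1}$ of kernels on the powers $S^n$ is consistent if $K^{(n)}(\mathbf{x},(\pi^n_{i_1,\dots,i_k})^{-1}(B))=K^{(k)}(\pi^n_{i_1,\dots,i_k}(\mathbf{x}),B)$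 for all $1\le k\le n$, $i_1,\dots,i_k\in\{1,\dots,n\}$ (repetitions allowed), $\mathbf{x}\in S^n$, measurable $B\subset S^k$, where $\pi^n_{i_1,\dots,i_k}(\mathbf{x})=(x_{i_1},\dots,x_{i_k})$. Feller and stochastically monotone are as usual: $P_t$ maps $\mathcal{C}_0(\mathbb{R})$ into itself with $\sup|P_tf-f|\to0$ as $t\to 0^+$, and $P_t$ maps bounded non-decreasing functions to non-decreasing functions. *)

From HB Require Import structures.
From mathcomp Require Import all_boot all_order all_algebra.
From mathcomp Require Import all_classical all_reals all_analysis.
From mathcomp Require Import measurable_realfun.
Import Order.TTheory GRing.Theory Num.Theory numFieldNormedType.Exports.

Set Implicit Arguments.
Unset Strict Implicit.
Unset Printing Implicit Defensive.

Local Open Scope classical_set_scope.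
Local Open Scope ring_scope.

Section defs.
Variable R : realType.

Definition C0 (f : R -> R) : Prop :=
  continuous f /\ (f x @[x --> +oo%R] --> 0) /\ (f x @[x --> -oo%R] --> 0).

Definition kact (k : R.-pker R ~> R) (f : R -> R) (x : R) : \bar R :=
  (\int[k x]_y (f y)%:E)%E.

(* A family (P_t)_{t >= 0} of Markov (probability) kernels on R,
   indexed by t : R (values for t < 0 are irrelevant). *)
Definition feller_semigroup (P : R -> R.-pker R ~> R) : Prop :=
  (forall x B, measurable B -> P 0 x B = \d_x B) /\
  (forall s t, 0 <= s -> 0 <= t -> forall x B, measurable B ->
     P (s + t) x B = (\int[P s x]_y P t y B)%E) /\
  (forall t, 0 <= t -> forall f, C0 f -> C0 (fun x => fine (kact (P t) f x))) /\
  (forall f, C0 f -> forall eps : R, 0 < eps -> exists2 delta : R, 0 < delta &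
     forall t, 0 < t < delta -> forall x, `|fine (kact (P t) f x) - f x| <= eps).

Definition stochastically_monotone (P : R -> R.-pker R ~> R) : Prop :=
  forall t, 0 <= t -> forall f : R -> R,
    (exists M : R, forall y, `|f y| <= M) ->
    {homo f : y z / y <= z} ->
    {homo kact (P t) f : x x' / x <= x' >-> (x <= x')%E}.

Definition Finv (P : R -> R.-pker R ~> R) (t : R) (x : \bar R) (u : R) : \bar R :=
  match x with
  | r%:E => ereal_inf [set y%:E | y in [set y : R | (u%:E <= P t r [set` `]-oo, y]])%E]]
  | +oo%E => +oo%E
  | -oo%E => -oo%E
  end.

Definition Ptilde (P : R -> R.-pker R ~> R) (t : R) (x : \bar R) (B : set (\bar R)) : \bar R :=
  match x with
  | r%:E => P t r (EFin @^-1` B)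
  | +oo%E => \d_(+oo%E) B
  | -oo%E => \d_(-oo%E) B
  end.

Definition Qn (P : R -> R.-pker R ~> R) (t : R) (n : nat)
    (x : n.-tuple (\bar R)) (B : set (n.-tuple (\bar R))) : \bar R :=
  lebesgue_measure
    ([set` `[0%R, 1%R]] `&` [set u | B [tuple Finv P t (tnth x i) u | i < n]]).

(* the family (Q^{(n)}_t)_{n >= 1} with Q^{(1)}_t = tilde P_t
   (\bar R^1 identified with 1-tuples) *)
Definition Qfam (P : R -> R.-pker R ~> R) (t : R) (n : nat)
    (x : n.-tuple (\bar R)) (B : set (n.-tuple (\bar R))) : \bar R :=
  if n == 1%N then Ptilde P t (nth 0%E x 0) [set y | B [tuple y | _ < n]]
  else Qn P t x B.

End defs.

Definition is_markov_kernel (R : realType) d (T : measurableType d)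
    (K : T -> set T -> \bar R) : Prop :=
  exists k : R.-pker T ~> T, forall x B, measurable B -> k x B = K x B.

Definition order_preserving (R : realType) (n : nat)
    (K : n.-tuple (\bar R) -> set (n.-tuple (\bar R)) -> \bar R) : Prop :=
  forall x : n.-tuple (\bar R), exists N : set (n.-tuple (\bar R)),
    [/\ measurable N, K x N = 0%E &
        forall y, ~ N y -> forall i j : 'I_n,
          (tnth x i <= tnth x j)%E -> (tnth y i <= tnth y j)%E].

Definition proj_coords (T : Type) (n k : nat) (idx : 'I_k -> 'I_n)
    (x : n.-tuple T) : k.-tuple T := [tuple tnth x (idx j) | j < k].

Definition consistent (R : realType)
    (K : forall n : nat, n.-tuple (\bar R) -> set (n.-tuple (\bar R)) -> \bar R) : Prop :=
  forall (k n : nat), (1 <= k)%N -> (k <= n)%N ->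
  forall (idx : 'I_k -> 'I_n) (x : n.-tuple (\bar R)) (B : set (k.-tuple (\bar R))),
    measurable B ->
    K n x (proj_coords idx @^-1` B) = K k (proj_coords idx x) B.

From HB Require Import structures.
From mathcomp Require Import all_boot all_order all_algebra.
From mathcomp Require Import all_classical all_reals all_analysis.
From mathcomp Require Import measurable_realfun.
Import Order.TTheory GRing.Theory Num.Theory numFieldNormedType.Exports.
Local Open Scope classical_set_scope.
Local Open Scope ring_scope.

(** It is a probability kernel because
    [(x, u) |-> F^{-1}_{x,t}(u)] is jointly measurable: by right continuity of
    distribution functions, [c < F^{-1}_{x,t}(u)] iff [P_t(x, ]-oo, c]) < u],
    and [x |-> P_t(x, ]-oo, c])] is measurable. Stochastic monotonicity makes
    [x |-> P_t(x, ]-oo, y])] nonincreasing, so [x |-> F^{-1}_{x,t}(u)] is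
    nondecreasing for every [u]: the coordinates of the random vector are
    ordered like those of [x] surely, not only almost surely. Projections act
    on the random vector by selecting coordinates, which gives consistency
    among the [Q^(n)_t]; for one coordinate, the quantile transform identifies
    the law of [F^{-1}_{x,t}(U)] with [P~_t(x, .)]. *)

Lemma measurable_mktuple {d1 d2} {T1 : measurableType d1} {T2 : measurableType d2}
    {n} {f : 'I_n -> T1 -> T2} :
  (forall i, measurable_fun setT (f i)) ->
  measurable_fun setT (fun x => [tuple f i x | i < n]).
Proof.
move=> mf; apply/measurable_fun_tnthP => i.
by rewrite (_ : _ \o _ = f i)//; apply/funext => x /=; rewrite tnth_mktuple.
Qed.

Lemma measurable_proj_coords d (T : measurableType d) n k (idx : 'I_k -> 'I_n) :
  measurable_fun setT (@proj_coords T n k idx).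
Proof. by apply: measurable_mktuple => j; exact: measurable_tnth. Qed.

Lemma proj_coords_mktuple {T U : Type} {n k : nat} (idx : 'I_k -> 'I_n)
    (f : T -> U) (x : n.-tuple T) :
  proj_coords idx [tuple f (tnth x i) | i < n] =
  [tuple f (tnth (proj_coords idx x) j) | j < k].
Proof. by apply: eq_from_tnth => j; rewrite !tnth_mktuple. Qed.

Lemma measure_setC_prob d (T : measurableType d) (R : realType)
    (mu : {measure set T -> \bar R}) (A : set T) :
  mu setT = 1%E -> measurable A -> mu (~` A) = (1 - mu A)%E.
Proof.
move=> mu1 mA; have muA : mu A \is a fin_num.
  by rewrite ge0_fin_numE// (le_lt_trans _ (ltry 1%R))// -mu1 le_measure ?inE.
by rewrite -mu1 -(setvU A) measureU ?addeK ?setICl//; exact: measurableC.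
Qed.

Section ereal_rays.
Context {R : realType}.
Local Open Scope ereal_scope.

(* [setT] is added so that the generator covers [\bar R], which
   [measure_unique] requires. *)
Definition ereal_rays : set (set (\bar R)) :=
  [set setT] `|` @ErealGenOInfty.G R.

Lemma ereal_raysE : @measurable _ (\bar R) = <<s ereal_rays >>.
Proof.
apply/seteqP; split.
  have -> : @measurable _ (\bar R) = <<s @ErealGenOInfty.G R >>.
    exact: ErealGenOInfty.measurableE.
  apply: smallest_sub => [|A GA].
    exact: smallest_sigma_algebra.
  by apply: sub_sigma_algebra; right.
apply: smallest_sub; first exact: sigma_algebra_measurable.
by move=> _ [->|[c ->]]; [exact: measurableT|exact: emeasurable_itv].
Qed.

Lemma setI_closed_ereal_rays : setI_closed ereal_rays.
Proof.
move=> _ _ [->|[a ->]] [->|[b ->]]; rewrite ?setTI ?setIT.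
- by left.
- by right; exists b.
- by right; exists a.
right; exists (Num.max a b); apply/seteqP; split => x /=; rewrite !in_itv /= !andbT.
  by rewrite EFin_max gt_max => -[-> ->].
by rewrite EFin_max gt_max => /andP[-> ->].
Qed.

End ereal_rays.

Section uniform_law.
Context d d' (X : measurableType d) (Y : measurableType d') (R : realType).
Local Open Scope ereal_scope.

Lemma uniform_law_cst (y : Y) (B : set Y) :
  lebesgue_measure ([set` `[0%R, 1%R]] `&` [set u : R | B y]) = \d_y B.
Proof.
rewrite diracE; have [By|nBy] := pselect (B y).
  rewrite mem_set// (_ : [set u | B y] = setT) ?setIT.
    by rewrite lebesgue_measure_itv /= lte_fin ltr01 sube0.
  by apply/seteqP; split => // u _.
rewrite memNset// (_ : [set u | B y] = set0) ?setI0 ?measure0//.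
by apply/seteqP; split => // u.
Qed.

Variable F : X -> R -> Y.

Definition uniform_law (x : X) (B : set Y) : \bar R :=
  lebesgue_measure ([set` `[0%R, 1%R]] `&` [set u | B (F x u)]).

Hypothesis mF : measurable_fun setT (fun z : X * R => F z.1 z.2).

Let m01 : measurable ([set` `[0%R, 1%R]] : set R) := measurable_itv _.

Let uniform_lawE x :
  uniform_law x = pushforward (mrestr lebesgue_measure m01) (F x).
Proof. by apply/funext => B; rewrite /uniform_law /pushforward /mrestr setIC. Qed.

Let uniform_law0 x : uniform_law x set0 = 0.
Proof. by rewrite uniform_lawE /pushforward preimage_set0 measure0. Qed.

Let uniform_law_ge0 x B : 0 <= uniform_law x B.
Proof. exact: measure_ge0. Qed.

Let uniform_law_sigma_additive x : semi_sigma_additive (uniform_law x).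
Proof.
(* the measure structure of [pushforward] is parametrized by the
   measurability of the map, which cannot be inferred *)
rewrite uniform_lawE; have /(_ (measurable_fun_pair2 x mF)) :=
  @measure_semi_sigma_additive _ _ _
    (pushforward (mrestr lebesgue_measure m01) (F x)).
exact.
Qed.

HB.instance Definition _ x := isMeasure.Build _ _ _ (uniform_law x)
  (uniform_law0 x) (uniform_law_ge0 x) (@uniform_law_sigma_additive x).

Definition uniform_measure x : {measure set Y -> \bar R} := uniform_law x.

Let measurable_uniform_measure B :
  measurable B -> measurable_fun setT (uniform_measure ^~ B).
Proof.
move=> mB.
pose A := (setT `*` [set` `[0%R, 1%R]]) `&` ((fun z => F z.1 z.2) @^-1` B).
have mA : measurable A.
  apply: measurableI; first exact: measurableX.
  by rewrite -[X in measurable X]setTI; exact: mF.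
rewrite (_ : uniform_measure ^~ B = lebesgue_measure \o xsection A).
  exact: measurable_fun_xsection.
apply/funext => x /=; congr (lebesgue_measure _).
by apply/seteqP; split => u; rewrite /xsection /= inE => -[] //= [].
Qed.

HB.instance Definition _ := isKernel.Build _ _ _ _ R uniform_measure
  measurable_uniform_measure.

Let uniform_measure_setT x : uniform_measure x setT = 1.
Proof.
change (uniform_law x setT = 1); rewrite /uniform_law.
have -> : [set u | [set: Y] (F x u)] = [set: R] by [].
by rewrite setIT lebesgue_measure_itv /= lte_fin ltr01 sube0.
Qed.

HB.instance Definition _ :=
  Kernel_isProbability.Build _ _ _ _ R uniform_measure
  uniform_measure_setT.

Definition uniform_kernel : R.-pker X ~> Y := uniform_measure.

End uniform_law.
Arguments uniform_law {d d' X Y R} F x B.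
Arguments uniform_kernel {d d' X Y R F} mF.

Lemma uniform_law_markov (R : realType) d (T : measurableType d)
    (F : T -> R -> T) :
  measurable_fun setT (fun z : T * R => F z.1 z.2) ->
  is_markov_kernel (uniform_law F).
Proof. by move=> mF; exists (uniform_kernel mF). Qed.

Lemma uniform_law_order_preserving (R : realType) n
    (F : n.-tuple (\bar R) -> R -> n.-tuple (\bar R)) :
  (forall x u (i j : 'I_n),
    (tnth x i <= tnth x j)%E -> (tnth (F x u) i <= tnth (F x u) j)%E) ->
  order_preserving (uniform_law F).
Proof.
move=> Fmono x.
pose N := \bigcup_(ij in [set: 'I_n * 'I_n])
  (if (tnth x ij.1 <= tnth x ij.2)%E
   then [set y : n.-tuple (\bar R) | (tnth y ij.2 < tnth y ij.1)%E] else set0).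
exists N; split.
- apply: fin_bigcup_measurable => [|[i j] _ /=]; first exact: finite_finset.
  case: ifP => _; last exact: measurable0.
  rewrite -[X in measurable X]setTI.
  by apply: (measurable_lte measurableT); exact: measurable_tnth.
- rewrite /uniform_law (_ : _ `&` _ = set0) ?measure0//.
  apply/seteqP; split => // u [_ [[i j] _ /=]]; case: ifP => // xij /=.
  by rewrite ltNge Fmono.
- move=> y Ny i j xij; rewrite leNgt; apply/negP => yji; apply: Ny.
  by exists (i, j) => //=; rewrite xij.
Qed.

Section quantile.
Context {R : realType}.
Local Open Scope ereal_scope.

(* [Finv P t r%:E] unfolds to [quantile (P t r)]. *)
Definition quantile (mu : set R -> \bar R) (u : R) : \bar R :=
  ereal_inf [set y%:E | y in [set y : R | u%:E <= mu [set` `]-oo, y]]]].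

Context {mu : {measure set R -> \bar R}} (mu1 : mu setT = 1).

Let mu_fin A : measurable A -> mu A \is a fin_num.
Proof.
move=> mA; rewrite ge0_fin_numE// (le_lt_trans _ (ltry 1%R))//.
by rewrite -mu1 le_measure ?inE.
Qed.

Lemma quantile_le u c : (quantile mu u <= c%:E) = (u%:E <= mu [set` `]-oo, c]]).
Proof.
apply/idP/idP => [qc|uc]; last by apply: ereal_inf_lbound; exists c.
have le_mu k : u%:E <= mu [set` `]-oo, (c + k.+1%:R^-1)%R]].
  have /ereal_inf_lt[_ [y uy <-]] : quantile mu u < (c + k.+1%:R^-1)%:E.
    by apply: le_lt_trans qc _; rewrite lte_fin ltrDl.
  rewrite lte_fin => yc; apply: (le_trans uy); rewrite le_measure ?inE//.
  by apply: subset_itvl; rewrite bnd_simp ltW.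
have cvg_mu : mu [set` `]-oo, (c + k.+1%:R^-1)%R]] @[k --> \oo] -->
    mu (\bigcap_k [set` `]-oo, (c + k.+1%:R^-1)%R]]).
  apply: nonincreasing_cvg_mu => //.
  - by rewrite -ge0_fin_numE// mu_fin.
  - exact: bigcapT_measurable.
  - move=> m n mn; apply/subsetPset; apply: subset_itvl.
    by rewrite bnd_simp lerD2l lef_pV2 ?posrE// ler_nat.
rewrite (itvNycEbigcap false c) -(cvg_lim _ cvg_mu)//.
apply: lime_ge; first by apply/cvg_ex; eexists; exact: cvg_mu.
exact: nearW.
Qed.

Lemma quantile_gt u c : (c%:E < quantile mu u) = (mu [set` `]-oo, c]] < u%:E).
Proof. by rewrite !ltNge quantile_le. Qed.

Lemma measurable_quantile : measurable_fun setT (quantile mu).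
Proof.
apply: (measurability _ (ErealGenOInfty.measurableE R)) => _ [_ [c ->] <-].
rewrite setTI (_ : _ @^-1` _ = [set` `]fine (mu [set` `]-oo, c]]), +oo[]).
  exact: measurable_itv.
apply/funext => u /=; rewrite !in_itv /= !andbT quantile_gt -lte_fin fineK//.
by apply: mu_fin.
Qed.

Lemma quantile_law C : measurable C ->
  lebesgue_measure ([set` `[0%R, 1%R]] `&` [set u | C (quantile mu u)]) =
  mu (EFin @^-1` C).
Proof.
move=> mC; have m01 : measurable ([set` `[0%R, 1%R]] : set R) := measurable_itv _.
rewrite setIC.
change (pushforward (mrestr lebesgue_measure m01) (quantile mu) C =
  pushforward mu EFin C).
have unif_setT : lebesgue_measure ([set: R] `&` [set` `[0%R, 1%R]]) = 1.
  by rewrite setTI lebesgue_measure_itv /= lte_fin ltr01 sube0.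
apply: (measure_unique ereal_rays (fun=> setT)).
- exact: ereal_raysE.
- exact: setI_closed_ereal_rays.
- by move=> _; left.
- by rewrite bigcup_const.
- exact: measurable_quantile.
- move=> mq _ [->|[c ->]]; rewrite /= /pushforward /mrestr.
    exact: etrans unif_setT (esym mu1).
  have [F muF] : exists F : R, mu [set` `]-oo, c]] = F%:E.
    by exists (fine (mu [set` `]-oo, c]])); rewrite fineK//; apply: mu_fin.
  have F0 : (0 <= F)%R by rewrite -lee_fin -muF.
  have F1 : (F <= 1)%R by rewrite -lee_fin -muF -mu1 le_measure ?inE.
  rewrite (_ : EFin @^-1` _ = ~` [set` `]-oo, c]]); last first.
    by rewrite setCitvl; apply/funext => x /=; rewrite !in_itv /= !andbT lte_fin.
  rewrite measure_setC_prob// muF.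
  rewrite (_ : _ `&` _ = [set` `]F, 1%R]]); last first.
    apply/seteqP; split => u; rewrite /= !in_itv /= ?andbT quantile_gt muF lte_fin.
      by case=> -> /andP[].
    by case/andP=> Fu ->; split=> //; rewrite (le_trans F0 (ltW Fu)).
  rewrite lebesgue_measure_itv /= lte_fin; case: ltP => // F1'.
  have -> : F = 1%R by apply/le_anti; rewrite F1.
  by rewrite EFinN subee.
- by move=> mq _; rewrite /= /pushforward /mrestr unif_setT ltry.
- by [].
Qed.

End quantile.

Section Finv.
Context {R : realType} (P : R -> R.-pker R ~> R) (t : R).
Local Open Scope ereal_scope.

Let P1 r : P t r setT = 1 := @prob_kernel _ _ _ _ _ (P t) r.

Lemma measurable_Finv :
  measurable_fun setT (fun z : \bar R * R => Finv P t z.1 z.2).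
Proof.
apply: (measurability _ (ErealGenOInfty.measurableE R)) => _ [_ [c ->] <-].
rewrite setTI (_ : _ @^-1` _ = fst @^-1` [set +oo] `|`
  (fst @^-1` range EFin `&` [set z | P t (fine z.1) [set` `]-oo, c]] < z.2%:E])).
  apply: measurableU.
    rewrite -[X in measurable X]setTI.
    by apply: measurable_fst => //; exact: emeasurable_set1.
  apply: measurableI.
    rewrite -[X in measurable X]setTI; apply: measurable_fst => //.
    exact: (@measurable_image_EFin R setT measurableT).
  rewrite -[X in measurable X]setTI; apply: (measurable_lte measurableT).
    apply: measurableT_comp (measurable_kernel (P t) _ (measurable_itv _)) _.
    exact: measurableT_comp.
  exact: measurableT_comp.
apply/seteqP; split => -[[r| |] u]; rewrite /= in_itv /= ?andbT.
- by rewrite (quantile_gt (P1 r)) => ?; right; split => //; exists r.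
- by left.
- by [].
- by case=> [//|[_]]; rewrite (quantile_gt (P1 r)).
- by rewrite ltry.
- by case=> [//|[[]]].
Qed.

Lemma measurable_Finv_tuple n : measurable_fun setT
  (fun z : n.-tuple (\bar R) * R => [tuple Finv P t (tnth z.1 i) z.2 | i < n]).
Proof.
apply: measurable_mktuple => i.
change (measurable_fun setT ((fun w : \bar R * R => Finv P t w.1 w.2) \o
  (fun z : n.-tuple (\bar R) * R => (tnth z.1 i, z.2)))).
apply: measurableT_comp measurable_Finv _.
apply: measurable_fun_pair measurable_snd.
exact: measurableT_comp (measurable_tnth i) measurable_fst.
Qed.

Lemma Finv_law a C : measurable C ->
  lebesgue_measure ([set` `[0%R, 1%R]] `&` [set u | C (Finv P t a u)]) =
  Ptilde P t a C.
Proof.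
by case: a => [r| |] mC; [exact: quantile_law | exact: uniform_law_cst..].
Qed.

Lemma QnE n :
  Qn P t (n:=n) = uniform_law (fun x u => [tuple Finv P t (tnth x i) u | i < n]).
Proof. by []. Qed.

Lemma Qn_proj_coords n k (idx : 'I_k -> 'I_n) x B :
  Qn P t x (proj_coords idx @^-1` B) = Qn P t (proj_coords idx x) B.
Proof.
rewrite /Qn; congr (lebesgue_measure (_ `&` _)); apply/funext => u /=.
by rewrite (proj_coords_mktuple idx (Finv P t ^~ u)).
Qed.

Lemma Qfam_Qn n (x : n.-tuple (\bar R)) B :
  measurable B -> Qfam P t x B = Qn P t x B.
Proof.
case: n x B => [|[|n]] x B mB //.
rewrite /Qfam /= -Finv_law; last first.
  have mtuple1 : measurable_fun setT (fun y : \bar R => [tuple y | _ < 1]).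
    by apply: measurable_mktuple => _; exact: measurable_id.
  by rewrite -[X in measurable X]setTI; exact: mtuple1 measurableT _ mB.
rewrite /Qn; congr (lebesgue_measure (_ `&` _)); apply/funext => u /=.
by congr B; apply: eq_from_tnth => i; rewrite !tnth_mktuple (ord1 i) (tnth_nth 0).
Qed.

Lemma Qfam_consistent : consistent (Qfam P t).
Proof.
move=> k n _ _ idx x B mB; rewrite !Qfam_Qn ?Qn_proj_coords//.
by rewrite -[X in measurable X]setTI; exact: measurable_proj_coords.
Qed.

Hypotheses (Pmono : stochastically_monotone P) (t0 : (0 <= t)%R).

Lemma kernel_cdf_antitone y :
  {homo P t ^~ [set` `]-oo, y]] : r s / (r <= s)%R >-> s <= r}.
Proof.
move=> r s rs; pose B := [set` `]y, +oo[] : set R.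
have mB : measurable B := measurable_itv _.
rewrite -setCitvr !measure_setC_prob//; apply: leeB => //.
have := Pmono t t0 (\1_B) _ _ r s rs; rewrite /kact !integral_indic// !setIT; apply.
  by exists 1%R => z; rewrite indicE; case: (z \in B); rewrite ?normr1 ?normr0.
move=> z1 z2 z12; rewrite !indicE.
have [z1B|] := boolP (z1 \in B); last by rewrite ler0n.
rewrite mem_set//; move/set_mem: z1B; rewrite /B /= !in_itv /= !andbT => yz1.
exact: lt_le_trans yz1 z12.
Qed.

Lemma Finv_nondecreasing u : {homo Finv P t ^~ u : a b / a <= b}.
Proof.
move=> [r| |] [s| |] //=; rewrite ?leey ?leNye// lee_fin => rs.
apply: ereal_inf_le_tmp => _ [y uy <-]; exists y => //.
by apply: le_trans uy _; apply: kernel_cdf_antitone.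
Qed.

End Finv.

Theorem proposition3p2 (R : realType) (P : R -> R.-pker R ~> R) :
  feller_semigroup P -> stochastically_monotone P ->
  (forall t : R, 0 <= t -> forall n : nat, (2 <= n)%N ->
     is_markov_kernel (Qn P t (n:=n)) /\ order_preserving (Qn P t (n:=n))) /\
  (forall t : R, 0 <= t -> consistent (Qfam P t)).
Proof.
move=> _ Pmono; split=> [t t0 n _|t _]; last exact: Qfam_consistent.
rewrite QnE; split; first exact: uniform_law_markov (measurable_Finv_tuple P t n).
apply: uniform_law_order_preserving => x u i j xij.
by rewrite !tnth_mktuple; exact: Finv_nondecreasing.
Qed.
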